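(* For all $a,b>0$ and $0\le v\le 1$, with $\mu:=\min\{1-v,v\}$, $$G(a,b)\le Hz_v(a,b)\le \left\{1+\frac{\mu^2}{2}\left(\log a-\log b\right)^2\right\}Hz_v(a,b)\le A(a,b).$$
   Context: For $a,b>0$: $A(a,b):=\frac{a+b}{2}$, $G(a,b):=\sqrt{ab}$, and for $0\le v\le 1$ the Heinz mean is $Hz_v(a,b):=\frac{a^{1-v}b^v+a^{v}b^{1-v}}{2}$. *)

From Stdlib Require Import Reals.
Open Scope R_scope.

Definition AM (a b : R) : R := (a + b) / 2.
Definition GM (a b : R) : R := sqrt (a * b).
Definition Heinz (v a b : R) : R :=
  (Rpower a (1 - v) * Rpower b v + Rpower a v * Rpower b (1 - v)) / 2.

(** Put a = e^(m + t/2) and b = e^(m - t/2).  Then G = e^m, Hz_v = e^m cosh((1/2 - v) t)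
    and A = e^m cosh(t/2), and Hz_v depends on v only through mu, so the chain reduces to
    (1 + mu^2 t^2 / 2) cosh((1/2 - mu) t) <= cosh(t/2).  Splitting t/2 = w + d with
    w = (1/2 - mu) t and d = mu t, this follows from
    cosh(w + d) = cosh w cosh d + sinh w sinh d >= cosh w (1 + d^2/2),
    because sinh w and sinh d both have the sign of t and cosh d >= 1 + d^2/2. *)
From Stdlib Require Import Reals Lra.
Open Scope R_scope.

Lemma cosh_ge_1 x : 1 <= cosh x.
Proof.
  unfold cosh.
  pose proof (exp_ineq1_le x); pose proof (exp_ineq1_le (- x)).
  lra.
Qed.

Lemma cosh_opp x : cosh (- x) = cosh x.
Proof. unfold cosh. rewrite Ropp_involutive. field. Qed.

Lemma cosh_plus x y : cosh (x + y) = cosh x * cosh y + sinh x * sinh y.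
Proof.
  unfold cosh, sinh.
  rewrite Ropp_plus_distr, !exp_plus.
  field.
Qed.

Lemma cosh_double x : cosh (2 * x) = 1 + 2 * sinh x ^ 2.
Proof.
  replace (2 * x) with (x + x) by ring.
  rewrite cosh_plus.
  unfold cosh, sinh.
  rewrite exp_Ropp.
  field. apply Rgt_not_eq, exp_pos.
Qed.

Lemma id_le_sinh x : 0 <= x -> x <= sinh x.
Proof.
  intro Hx.
  assert (Hder : derivable (sinh - id)%F)
    by (apply derivable_minus; [apply derivable_sinh | apply derivable_id]).
  assert (Hincr : increasing (sinh - id)%F).
  { apply (nonneg_derivative_1 _ Hder). intro y.
    rewrite (pr_nu _ y _
      (derivable_pt_minus _ _ y (derivable_pt_sinh y) (derivable_pt_id y))).
    rewrite derive_pt_minus, derive_pt_sinh, derive_pt_id.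
    pose proof (cosh_ge_1 y). lra. }
  specialize (Hincr 0 x Hx).
  unfold minus_fct, id in Hincr. rewrite sinh_0 in Hincr.
  lra.
Qed.

Lemma sinh_opp x : sinh (- x) = - sinh x.
Proof. unfold sinh. rewrite Ropp_involutive. field. Qed.

Lemma cosh_ge_quadratic x : 1 + x ^ 2 / 2 <= cosh x.
Proof.
  replace x with (2 * (x / 2)) at 2 by field.
  rewrite cosh_double.
  enough (Hsq : (x / 2) ^ 2 <= sinh (x / 2) ^ 2) by lra.
  destruct (Rle_dec 0 x) as [Hx | Hx].
  - pose proof (id_le_sinh (x / 2) ltac:(lra)). nra.
  - pose proof (id_le_sinh (- (x / 2)) ltac:(lra)).
    rewrite sinh_opp in *. nra.
Qed.

Lemma sinh_mul_nonneg x y : 0 <= x * y -> 0 <= sinh x * sinh y.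
Proof.
  intro Hxy.
  destruct (Rle_dec 0 x) as [Hx | Hx], (Rle_dec 0 y) as [Hy | Hy].
  - pose proof (id_le_sinh x Hx); pose proof (id_le_sinh y Hy). nra.
  - replace x with 0 by nra. rewrite sinh_0. lra.
  - replace y with 0 by nra. rewrite sinh_0. lra.
  - pose proof (id_le_sinh (- x) ltac:(lra)); pose proof (id_le_sinh (- y) ltac:(lra)).
    rewrite sinh_opp in *. nra.
Qed.

Lemma cosh_plus_ge x d : 0 <= x * d -> (1 + d ^ 2 / 2) * cosh x <= cosh (x + d).
Proof.
  intro Hxd.
  rewrite cosh_plus.
  pose proof (cosh_ge_quadratic d); pose proof (cosh_ge_1 x).
  pose proof (sinh_mul_nonneg x d Hxd).
  nra.
Qed.

Lemma cosh_half_ge mu t : 0 <= mu <= 1 / 2 ->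
  (1 + mu ^ 2 / 2 * t ^ 2) * cosh ((1 / 2 - mu) * t) <= cosh (t / 2).
Proof.
  intro Hmu.
  replace (t / 2) with ((1 / 2 - mu) * t + mu * t) by field.
  replace (mu ^ 2 / 2 * t ^ 2) with ((mu * t) ^ 2 / 2) by field.
  apply cosh_plus_ge.
  replace ((1 / 2 - mu) * t * (mu * t)) with ((1 / 2 - mu) * mu * t ^ 2) by ring.
  apply Rmult_le_pos; [nra | apply pow2_ge_0].
Qed.

Lemma cosh_half_sub_Rmin v t :
  cosh ((1 / 2 - Rmin (1 - v) v) * t) = cosh ((1 / 2 - v) * t).
Proof.
  unfold Rmin; destruct Rle_dec; [| reflexivity].
  rewrite <- (cosh_opp ((1 / 2 - v) * t)). f_equal. field.
Qed.

Lemma GM_exp x y : GM (exp x) (exp y) = exp ((x + y) / 2).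
Proof.
  unfold GM.
  rewrite <- exp_plus.
  replace (x + y) with ((x + y) / 2 + (x + y) / 2) at 1 by field.
  rewrite exp_plus.
  apply sqrt_square, Rlt_le, exp_pos.
Qed.

Lemma AM_exp x y : AM (exp x) (exp y) = exp ((x + y) / 2) * cosh ((x - y) / 2).
Proof.
  unfold AM, cosh.
  rewrite Rmult_div_assoc, Rmult_plus_distr_l, <- !exp_plus.
  f_equal; f_equal; f_equal; field.
Qed.

Lemma Heinz_exp v x y :
  Heinz v (exp x) (exp y) = exp ((x + y) / 2) * cosh ((1 / 2 - v) * (x - y)).
Proof.
  unfold Heinz, Rpower, cosh.
  rewrite !ln_exp, Rmult_div_assoc, Rmult_plus_distr_l, <- !exp_plus.
  f_equal; f_equal; f_equal; field.
Qed.

Theorem corollary2p4 (a b v : R) (ha : 0 < a) (hb : 0 < b)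
  (hv0 : 0 <= v) (hv1 : v <= 1) :
  let mu := Rmin (1 - v) v in
  GM a b <= Heinz v a b /\
  Heinz v a b <= (1 + mu ^ 2 / 2 * (ln a - ln b) ^ 2) * Heinz v a b /\
  (1 + mu ^ 2 / 2 * (ln a - ln b) ^ 2) * Heinz v a b <= AM a b.
Proof.
  intro mu.
  assert (Hmu : 0 <= mu <= 1 / 2) by (unfold mu, Rmin; destruct Rle_dec; lra).
  set (x := ln a); set (y := ln b).
  rewrite <- (exp_ln a ha), <- (exp_ln b hb).
  fold x y.
  rewrite GM_exp, AM_exp, Heinz_exp, <- (cosh_half_sub_Rmin v).
  fold mu.
  set (t := x - y).
  set (E := exp ((x + y) / 2)).
  set (C := cosh ((1 / 2 - mu) * t)).
  set (q := mu ^ 2 / 2 * t ^ 2).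
  assert (HE : 0 < E) by apply exp_pos.
  assert (HC : 1 <= C) by apply cosh_ge_1.
  assert (Hq : 0 <= q)
    by (apply Rmult_le_pos; [pose proof (pow2_ge_0 mu); lra | apply pow2_ge_0]).
  pose proof (cosh_half_ge mu t Hmu) as Hhalf; fold C q in Hhalf.
  assert (HEC : 0 <= E * C) by nra.
  split; [| split].
  - nra.
  - nra.
  - rewrite Rmult_comm, Rmult_assoc. apply Rmult_le_compat_l; lra.
Qed.
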